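(* Let $K$ be a field, $R=K[x_0,\dots,x_n]$, $I\subseteq R$ an ideal, and $s\ge1$ an integer. If $I$ is primary to the ideal $(x_s,\dots,x_n)$ and $\widetilde I\cap\big(I:(x_s,\dots,x_n)\big)\subseteq I$, then $I$ is Ratliff-Rush closed.
   Context: Ratliff-Rush closure: for an ideal $I$ of a commutative Noetherian ring $R$ containing a nonzerodivisor, $\widetilde I=\bigcup_{k\ge1}(I^{k+1}:I^k)$, where $I^{k+1}:I^k=\{x\in R: xI^k\subseteq I^{k+1}\}$; $I$ is Ratliff-Rush closed if $\widetilde I=I$. (An ideal primary to $(x_s,\dots,x_n)$ contains a power of $x_n$, hence a nonzerodivisor.) *)

From HB Require Import structures.
From mathcomp Require Import all_boot all_order all_algebra.
From mathcomp Require Export mpoly.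
Set Implicit Arguments. Unset Strict Implicit. Unset Printing Implicit Defensive.
Import GRing.Theory.
Local Open Scope ring_scope.

Section Ideals.
Variable R : comNzRingType.

Definition is_ideal (I : R -> Prop) : Prop :=
  [/\ I 0, (forall x y, I x -> I y -> I (x + y)) & (forall r x, I x -> I (r * x))].

Definition ideal_mul (J I : R -> Prop) : R -> Prop :=
  fun x => exists s : seq (R * R),
    (forall p, p \in s -> J p.1 /\ I p.2) /\ x = \sum_(p <- s) p.1 * p.2.

Fixpoint ideal_pow (I : R -> Prop) (k : nat) : R -> Prop :=
  match k with
  | 0 => fun _ => True
  | k'.+1 => ideal_mul (ideal_pow I k') I
  end.

Definition colon (I J : R -> Prop) : R -> Prop :=
  fun x => forall y, J y -> I (x * y).

Definition radical (I : R -> Prop) : R -> Prop :=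
  fun x => exists m : nat, I (x ^+ m).

Definition is_primary (I : R -> Prop) : Prop :=
  [/\ is_ideal I, ~ I 1 &
      forall a b, I (a * b) -> I a \/ radical I b].

Definition primary_to (I P : R -> Prop) : Prop :=
  is_primary I /\ forall x, radical I x <-> P x.

Definition ratliff_rush (I : R -> Prop) : R -> Prop :=
  fun x => exists k : nat, (1 <= k)%N /\ colon (ideal_pow I k.+1) (ideal_pow I k) x.

Definition rr_closed (I : R -> Prop) : Prop :=
  forall x, ratliff_rush I x <-> I x.

End Ideals.

Definition var_ideal (K : comNzRingType) (n s : nat) : {mpoly K[n.+1]} -> Prop :=
  fun f => exists c : 'I_n.+1 -> {mpoly K[n.+1]},
    f = \sum_(i < n.+1 | (s <= i)%N) c i * 'X_i.
Arguments var_ideal : clear implicits.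

From HB Require Import structures.
From mathcomp Require Import all_boot all_order all_algebra.
From mathcomp Require Import mpoly.

Set Implicit Arguments.
Unset Strict Implicit.
Unset Printing Implicit Defensive.

Import GRing.Theory.
Local Open Scope ring_scope.

(* Let m = (x_s, ..., x_n).  As I is m-primary, every variable of m has a power
   in I, so by pigeonhole I contains all monomials of some degree N in these
   variables.  Given x in the Ratliff-Rush closure, descend on d from N: if
   x w m lies in I for every monomial w of degree d, then each such x w lies in
   I : m and (being a multiple of x) in the Ratliff-Rush closure, hence in I by
   hypothesis.  At d = 0 this gives x in I. *)

Lemma size_count_memE (T : finType) (w : seq T) :
  size w = (\sum_(i : T) count_mem i w)%N.
Proof.
rewrite -sum1_size (partition_big id predT) //=.
by apply: eq_bigr => i _; rewrite sum1_count.
Qed.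

Lemma count_mem_pigeonhole (T : finType) (w : seq T) E :
  (#|T| * E < size w)%N -> exists i, (E < count_mem i w)%N.
Proof.
move=> big_w; apply/existsP; apply: contraLR big_w => /existsPn small.
rewrite -leqNgt size_count_memE -sum_nat_const leq_sum // => i _.
by rewrite leqNgt small.
Qed.

Section IdealTheory.
Variable R : comNzRingType.
Variable I : R -> Prop.
Hypothesis idealI : is_ideal I.

Lemma idealMl r x : I x -> I (r * x).
Proof. by case: idealI => _ _; apply. Qed.

Lemma idealMr r x : I x -> I (x * r).
Proof. by rewrite mulrC; apply: idealMl. Qed.

Lemma ideal_sum (T : Type) (r : seq T) (P : pred T) (F : T -> R) :
  (forall i, P i -> I (F i)) -> I (\sum_(i <- r | P i) F i).
Proof. by case: idealI => I0 ID _; apply: big_ind. Qed.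

Lemma ideal_prod_seq (T : eqType) (r : seq T) (F : T -> R) i :
  i \in r -> I (F i ^+ count_mem i r) -> I (\prod_(j <- r) F j).
Proof.
move=> ri IFi; rewrite -prodr_undup_exp_count (bigD1_seq i) ?mem_undup //=.
  exact: idealMr.
exact: undup_uniq.
Qed.

Lemma ideal_sub_ratliff_rush x : I x -> ratliff_rush I x.
Proof.
move=> Ix; exists 1%N; split => // y [s [Is ->]].
exists [seq (p.1 * p.2, x) | p <- s]; split.
  move=> _ /mapP [p sp ->] /=; split => //.
  exists [:: p]; split; last by rewrite big_seq1.
  by move=> q; rewrite inE => /eqP ->; have [] := Is p sp.
by rewrite big_map mulr_sumr; apply: eq_bigr => p _; rewrite mulrC.
Qed.

Lemma ratliff_rushMl r x : ratliff_rush I x -> ratliff_rush I (r * x).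
Proof.
case=> k [k_gt0 xk]; exists k; split => // y Iky.
rewrite -mulrA; have [s [Is ->]] := xk y Iky.
exists [seq (p.1, r * p.2) | p <- s]; split.
  by move=> _ /mapP [p sp ->] /=; have [? ?] := Is p sp; split; last exact: idealMl.
by rewrite big_map mulr_sumr; apply: eq_bigr => p _; rewrite mulrCA.
Qed.

(* The ideal generated by the family [g i], [P i]; [var_ideal K n s] is the
   instance [g i = 'X_i], [P i = (s <= i)]. *)
Definition gen_ideal (m : nat) (g : 'I_m -> R) (P : pred 'I_m) : R -> Prop :=
  fun f => exists c : 'I_m -> R, f = \sum_(i < m | P i) c i * g i.

Variables (m : nat) (g : 'I_m -> R) (P : pred 'I_m).

Lemma gen_ideal_gen i : P i -> gen_ideal g P (g i).
Proof.
move=> Pi; exists (fun j => (j == i)%:R).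
rewrite (bigD1 i) //= eqxx mul1r big1 ?addr0 // => j /andP [_ /negPf ->].
by rewrite mul0r.
Qed.

Lemma colon_gen_ideal x :
  (forall i, P i -> I (x * g i)) -> colon I (gen_ideal g P) x.
Proof.
move=> Ixg _ [c ->]; rewrite mulr_sumr; apply: ideal_sum => i Pi.
by rewrite mulrCA; apply/idealMl/Ixg.
Qed.

Lemma ideal_prod_gens :
  (forall i, P i -> radical I (g i)) ->
  exists N, forall w : seq 'I_m, (N <= size w)%N -> all P w ->
    I (\prod_(j <- w) g j).
Proof.
move=> radI.
have [e Ie] : exists e : 'I_m -> nat, forall i, P i -> I (g i ^+ e i).
  apply: (@fin_all_exists _ (fun=> nat) (fun i k => P i -> I (g i ^+ k))) => i.
  by case: (boolP (P i)) => [/radI [k Ik]|_]; [exists k | exists 0%N].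
exists (#|'I_m| * \max_i e i).+1 => w big_w Pw.
have [i ei_lt] := count_mem_pigeonhole big_w.
have wi : i \in w by rewrite -has_pred1 has_count (leq_ltn_trans _ ei_lt).
apply: (ideal_prod_seq wi).
rewrite -(subnK (ltnW (leq_ltn_trans (leq_bigmax i) ei_lt))) exprD.
by apply/idealMl/Ie/(allP Pw).
Qed.

Hypothesis colon_closed :
  forall x, ratliff_rush I x -> colon I (gen_ideal g P) x -> I x.

Lemma ratliff_rush_mem_of_prod_gens N x : ratliff_rush I x ->
  (forall w : seq 'I_m, size w = N -> all P w -> I (x * \prod_(j <- w) g j)) ->
  I x.
Proof.
elim: N x => [|N IHN] x rrx Ixw.
  by have := Ixw [::] erefl isT; rewrite big_nil mulr1.
apply: IHN => // w size_w Pw; apply: colon_closed.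
  by rewrite mulrC; apply: ratliff_rushMl.
apply: colon_gen_ideal => i Pi.
have: I (x * \prod_(j <- i :: w) g j) by apply: Ixw; rewrite /= ?size_w ?Pi.
by rewrite big_cons mulrCA mulrC.
Qed.

End IdealTheory.

Theorem mainTheorem2 (K : fieldType) (n s : nat) (I : {mpoly K[n.+1]} -> Prop) :
  (1 <= s)%N ->
  is_ideal I ->
  primary_to I (var_ideal K n s) ->
  (forall x, ratliff_rush I x -> colon I (var_ideal K n s) x -> I x) ->
  rr_closed I.
Proof.
move=> _ idealI [_ radicalE] colon_closed x.
split; last exact: ideal_sub_ratliff_rush.
pose g (i : 'I_n.+1) : {mpoly K[n.+1]} := 'X_i.
pose P (i : 'I_n.+1) := (s <= i)%N.
have [N IN] := ideal_prod_gens idealI (fun i Pi => (radicalE _).2 (gen_ideal_gen g Pi)).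
move=> rrx; apply: (ratliff_rush_mem_of_prod_gens (N := N) (g := g) (P := P)
                     idealI colon_closed rrx).
by move=> w size_w Pw; apply: (idealMl idealI); apply: IN; rewrite ?size_w.
Qed.
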